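(* Let $R=k[x_1,\dots,x_n]$ be a polynomial ring over a field $k$, and let $I$ be a monomial ideal of $R$ such that for every $F\in\mathcal F(I)$ the primary component $I_F$ is generated by monomials of one and the same degree $d_F$. Then $I^{(t)}$ is integrally closed for all $t\gg 0$ if and only if for every $F\in\mathcal F(I)$ the ideal $I_F$ contains the monomials $x_i^{d_F-1}x_j$ for all $i,j\notin F$.
   Context: For $F\subseteq[n]=\{1,\dots,n\}$, $P_F$ is the ideal generated by the variables $x_i$ with $i\notin F$. $\mathcal F(I)$ is the set of all $F\subseteq[n]$ such that $P_F$ is a minimal prime of $I$, and for $F\in\mathcal F(I)$, $I_F$ denotes the primary component of $I$ associated with $P_F$. The $t$-th symbolic power $I^{(t)}$ is the intersection of the primary components of $I^t$ associated with the minimal primes of $I$. *)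

From HB Require Import structures.
From mathcomp Require Import all_boot all_order all_algebra.
From mathcomp Require Import mpoly.
Set Implicit Arguments. Unset Strict Implicit. Unset Printing Implicit Defensive.
Import GRing.Theory.
Local Open Scope ring_scope.

Section IdealTheory.
Variable R : comRingType.

Definition ideal_gen (S : R -> Prop) : R -> Prop :=
  fun f => exists s : seq (R * R),
    (forall p, p \in s -> S p.2) /\ f = \sum_(p <- s) p.1 * p.2.

Definition is_ideal (J : R -> Prop) : Prop :=
  [/\ J 0, (forall a b, J a -> J b -> J (a + b)) & (forall r a, J a -> J (r * a))].

Definition is_prime_ideal (P : R -> Prop) : Prop :=
  [/\ is_ideal P, ~ P 1 & (forall a b, P (a * b) -> P a \/ P b)].

Definition minimal_prime (I P : R -> Prop) : Prop :=
  [/\ is_prime_ideal P, (forall f, I f -> P f) &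
      (forall Q, is_prime_ideal Q -> (forall f, I f -> Q f) ->
         (forall f, Q f -> P f) -> forall f, P f -> Q f)].

Definition ideal_mul (I J : R -> Prop) : R -> Prop :=
  ideal_gen (fun f => exists a b, [/\ I a, J b & f = a * b]).

Fixpoint ideal_pow (I : R -> Prop) (t : nat) : R -> Prop :=
  match t with
  | 0 => fun _ => True
  | t'.+1 => ideal_mul (ideal_pow I t') I
  end.

Definition integral_over_ideal (I : R -> Prop) (f : R) : Prop :=
  exists (m : nat) (a : nat -> R),
    [/\ (0 < m)%N, (forall i, (1 <= i <= m)%N -> ideal_pow I i (a i)) &
        f ^+ m + \sum_(1 <= i < m.+1) a i * f ^+ (m - i) = 0].

Definition integrally_closed (I : R -> Prop) : Prop :=
  forall f, integral_over_ideal I f -> I f.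

(* The primary component of J associated with a minimal prime P of J:
   the contraction J R_P \cap R = {f | g f \in J for some g \notin P}. *)
Definition iso_component (J P : R -> Prop) : R -> Prop :=
  fun f => exists g, ~ P g /\ J (g * f).

End IdealTheory.

Section Monomial.
Variables (k : fieldType) (n : nat).
Local Notation R := {mpoly k[n]}.

Definition monomial_ideal (I : R -> Prop) : Prop :=
  exists S : 'X_{1..n} -> Prop,
    forall f, I f <-> ideal_gen (fun g => exists m, S m /\ g = 'X_[m]) f.

Definition gen_by_monomials_of_degree (J : R -> Prop) (d : nat) : Prop :=
  exists S : 'X_{1..n} -> Prop, (forall m, S m -> mdeg m = d) /\
    forall f, J f <-> ideal_gen (fun g => exists m, S m /\ g = 'X_[m]) f.

Definition PF (F : {set 'I_n}) : R -> Prop :=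
  ideal_gen (fun g => exists i : 'I_n, i \notin F /\ g = 'X_i).

Definition in_calF (I : R -> Prop) (F : {set 'I_n}) : Prop :=
  minimal_prime I (PF F).

Definition IF (I : R -> Prop) (F : {set 'I_n}) : R -> Prop :=
  iso_component I (PF F).

Definition symbolic_power (I : R -> Prop) (t : nat) : R -> Prop :=
  fun f => forall F, in_calF I F -> iso_component (ideal_pow I t) (PF F) f.

End Monomial.

From HB Require Import structures.
From mathcomp Require Import all_boot all_order all_algebra.
From mathcomp Require Import mpoly.
From mathcomp Require Import ring zify.
From Stdlib Require Import Classical.
Set Implicit Arguments. Unset Strict Implicit. Unset Printing Implicit Defensive.
Import GRing.Theory.
Local Open Scope ring_scope.

(* Let v_F be the order of a polynomial in the variables x_i, i \notin F.  Since v_F is a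
   valuation, P_F^N = {v_F >= N} is integrally closed; and I_F lies in P_F^(d_F), as its
   generators have degree d_F outside F.

   If I_F contains all the x_i^(d_F - 1) x_j, then for t >= n d_F every monomial of degree
   d_F t outside F is a product of t of them, so the P_F-component of I^t is P_F^(d_F t) and
   I^(t) is an intersection of integrally closed ideals.

   Conversely, let u = x_i^(d t - 1) x_j h, d = d_F, where h is a large monomial in the
   variables x_l, l \in F, which puts u in the components of I^t at the other minimal primes.
   Then u^d = u1^(d-1) u2 with u1 = x_i^(d t) h and u2 = x_i^(d (t-1)) x_j^d h in I^(t), so u
   is integral over I^(t).  If u lies in I^(t), it is divisible, up to a factor outside P_F,
   by t generators of I, each of degree at least d outside F; counting degrees, the one
   containing x_j is x_i^(d-1) x_j times variables of F. *)

(** * Ideals of a commutative ring *)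

Section Ideals.
Variable R : comRingType.
Implicit Types (S J K P : R -> Prop) (f g : R).

Lemma ideal_gen_is_ideal S : is_ideal (ideal_gen S).
Proof.
split.
- by exists [::]; rewrite big_nil.
- move=> _ _ [s [Ss ->]] [s' [Ss' ->]]; exists (s ++ s'); rewrite big_cat.
  by split=> // p; rewrite mem_cat => /orP [/Ss|/Ss'].
- move=> r _ [s [Ss ->]]; exists [seq (r * p.1, p.2) | p <- s]; split.
  + by move=> q /mapP [p ps ->]; exact: (Ss p ps).
  + by rewrite big_map big_distrr /=; apply: eq_bigr => p _; rewrite mulrA.
Qed.

Lemma ideal_gen_mem S f : S f -> ideal_gen S f.
Proof.
move=> Sf; exists [:: (1, f)]; rewrite big_seq1 mul1r.
by split=> // p; rewrite mem_seq1 => /eqP ->.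
Qed.

Lemma ideal_gen_min S J : is_ideal J -> (forall f, S f -> J f) ->
  forall f, ideal_gen S f -> J f.
Proof.
move=> [J0 JD JM] SJ _ [s [Ss ->]]; rewrite big_seq.
by apply: big_ind => // p ps; apply/JM/SJ/Ss.
Qed.

Lemma ideal_sum J (T : eqType) (r : seq T) (F : T -> R) : is_ideal J ->
  (forall x, x \in r -> J (F x)) -> J (\sum_(x <- r) F x).
Proof. by move=> [J0 JD _] JF; rewrite big_seq; apply: big_ind. Qed.

Lemma ideal_mulr J f g : is_ideal J -> J g -> J (f * g).
Proof. by case=> _ _; apply. Qed.

Lemma ideal_mull J f g : is_ideal J -> J f -> J (f * g).
Proof. by rewrite mulrC; apply: ideal_mulr. Qed.

Lemma ideal_pow_is_ideal K t : is_ideal (ideal_pow K t).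
Proof. by case: t => [|t]; [split | exact: ideal_gen_is_ideal]. Qed.

Lemma ideal_pow_mul K t f g : ideal_pow K t f -> K g -> ideal_pow K t.+1 (f * g).
Proof. by move=> Kf Kg; apply: ideal_gen_mem; exists f, g. Qed.

Lemma ideal_pow_expr K t f : K f -> ideal_pow K t (f ^+ t).
Proof. by move=> Kf; elim: t => [|t IH] //; rewrite exprSr; exact: ideal_pow_mul. Qed.

Lemma ideal_pow_sub K K' t : (forall f, K f -> K' f) ->
  forall f, ideal_pow K t f -> ideal_pow K' t f.
Proof.
move=> KK'; elim: t => [|t IH] //=.
apply: ideal_gen_min; first exact: ideal_gen_is_ideal.
by move=> _ [f [g [Kf Kg ->]]]; apply: ideal_pow_mul; [apply: IH | apply: KK'].
Qed.

Lemma integral_over_ideal_sub K K' f : (forall g, K g -> K' g) ->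
  integral_over_ideal K f -> integral_over_ideal K' f.
Proof.
move=> KK' [m [a [m_gt0 Ka eq_f]]]; exists m, a; split=> // i im.
exact/(ideal_pow_sub KK')/Ka.
Qed.

Lemma integral_over_ideal_expr K m f : (0 < m)%N -> ideal_pow K m (f ^+ m) ->
  integral_over_ideal K f.
Proof.
move=> m_gt0 Kfm; exists m, (fun i => if i == m then - f ^+ m else 0); split=> //.
- move=> i _; case: eqP => [->|_]; last by case: (ideal_pow_is_ideal K i).
  by rewrite -mulN1r; apply: ideal_mulr => //; exact: ideal_pow_is_ideal.
- rewrite big_nat_recr //= eqxx subnn expr0 mulr1 big_nat big1 ?add0r ?subrr //.
  by move=> i /andP [_ im]; rewrite ltn_eqF // mul0r.
Qed.

Lemma integrally_closed_eq J K : (forall f, J f <-> K f) -> integrally_closed K ->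
  integrally_closed J.
Proof.
move=> JK Kclosed f /(integral_over_ideal_sub (fun g => proj1 (JK g))) /Kclosed.
exact: (proj2 (JK f)).
Qed.

Lemma iso_component_is_ideal J P : is_ideal J -> is_prime_ideal P ->
  is_ideal (iso_component J P).
Proof.
move=> [J0 JD JM] [_ P1 Pprime]; split.
- by exists 1; rewrite mulr0.
- move=> a b [g [Pg Ja]] [h [Ph Jb]]; exists (g * h); split; first by case/Pprime.
  have -> : g * h * (a + b) = h * (g * a) + g * (h * b) by ring.
  exact/JD/JM/Jb/JM/Ja.
- move=> r a [g [Pg Ja]]; exists g; split=> //.
  have -> : g * (r * a) = r * (g * a) by ring.
  exact: JM.
Qed.

Lemma sub_iso_component J P f : ~ P 1 -> J f -> iso_component J P f.
Proof. by move=> P1 Jf; exists 1; rewrite mul1r. Qed.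

Lemma iso_component_pow_is_ideal K P t : is_prime_ideal P ->
  is_ideal (iso_component (ideal_pow K t) P).
Proof. by apply: iso_component_is_ideal; exact: ideal_pow_is_ideal. Qed.

Lemma iso_component_pow_mul K P t f g : is_prime_ideal P ->
  iso_component (ideal_pow K t) P f -> iso_component K P g ->
  iso_component (ideal_pow K t.+1) P (f * g).
Proof.
move=> [_ _ Pprime] [u [Pu Kf]] [v [Pv Kg]]; exists (u * v); split; first by case/Pprime.
have -> : u * v * (f * g) = (u * f) * (v * g) by ring.
exact: ideal_pow_mul.
Qed.

Lemma iso_component_pow_expr K P t f : is_prime_ideal P -> iso_component K P f ->
  iso_component (ideal_pow K t) P (f ^+ t).
Proof.
move=> Pprime Kf; elim: t => [|t IH]; first by case: Pprime => _ P1 _; exists 1.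
by rewrite exprSr; apply: iso_component_pow_mul.
Qed.

End Ideals.

(** * The powers of P_F *)

Section PFPowers.
Variables (k : fieldType) (n : nat).
Local Notation R := {mpoly k[n]}.
Implicit Types (D : 'X_{1..n} -> Prop) (F G : {set 'I_n}) (m u w : 'X_{1..n}) (f g h : R).

Definition supp_in D h := forall m, m \in msupp h -> D m.

Definition upward_closed D := forall m m', D m -> (m <= m')%MM -> D m'.

Lemma supp_in0 D : supp_in D 0.
Proof. by move=> m; rewrite msupp0. Qed.

Lemma supp_inD D f g : supp_in D f -> supp_in D g -> supp_in D (f + g).
Proof. by move=> Df Dg m /msuppD_le; rewrite mem_cat => /orP [/Df|/Dg]. Qed.

Lemma supp_inM D1 D2 f g : supp_in D1 f -> supp_in D2 g ->
  supp_in (fun m => exists u w, [/\ D1 u, D2 w & m = (u + w)%MM]) (f * g).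
Proof.
move=> D1f D2g m /msuppM_le /allpairsP [[u w] /= [fu gw ->]].
by exists u, w; split=> //; [apply: D1f | apply: D2g].
Qed.

Lemma supp_inX D m : D m -> supp_in D 'X_[m].
Proof. by move=> Dm m'; rewrite msuppX mem_seq1 => /eqP ->. Qed.

Lemma supp_in_is_ideal D : upward_closed D -> is_ideal (supp_in D).
Proof.
move=> upD; split; [exact: supp_in0 | exact: supp_inD |].
move=> r f Df m /(supp_inM (D1 := fun _ => True) (fun _ _ => I) Df) [u [w [_ Dw ->]]].
exact: upD Dw (lem_addl _ _).
Qed.

Lemma supp_in_ideal_gen D S f : upward_closed D -> (forall g, S g -> supp_in D g) ->
  ideal_gen S f -> supp_in D f.
Proof. by move=> upD SD; apply: (ideal_gen_min _ SD); exact: supp_in_is_ideal. Qed.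

Lemma supp_in_monomial_gen S f :
  ideal_gen (fun g => exists m, S m /\ g = 'X_[m]) f ->
  supp_in (fun m => exists2 s, S s & (s <= m)%MM) f.
Proof.
apply: supp_in_ideal_gen.
- by move=> m m' [s Ss sm] mm'; exists s => //; exact: lepm_trans mm'.
- by move=> _ [s [Ss ->]]; apply: supp_inX; exists s => //; exact: lepm_refl.
Qed.

Lemma ideal_mpolyX_lem (J : R -> Prop) u w : is_ideal J -> J 'X_[u] -> (u <= w)%MM ->
  J 'X_[w].
Proof. by move=> Jideal Ju uw; rewrite -(submK uw) mpolyXD; exact: ideal_mulr. Qed.

Definition outdeg F m := (\sum_(i < n | i \notin F) m i)%N.

Lemma outdeg0 F : outdeg F 0%MM = 0%N.
Proof. by rewrite /outdeg big1 // => i _; rewrite mnm0E. Qed.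

Lemma outdegD F m u : outdeg F (m + u)%MM = (outdeg F m + outdeg F u)%N.
Proof. by rewrite /outdeg -big_split; apply: eq_bigr => i _; rewrite mnmDE. Qed.

Lemma outdegB F m u : (u <= m)%MM -> outdeg F (m - u)%MM = (outdeg F m - outdeg F u)%N.
Proof. by move=> um; rewrite -{2}(submK um) outdegD addnK. Qed.

Lemma outdeg_lem F m u : (m <= u)%MM -> (outdeg F m <= outdeg F u)%N.
Proof. by move=> /mnm_lepP mu; apply: leq_sum => i _; exact: mu. Qed.

Lemma outdeg1 F i : outdeg F U_(i)%MM = (i \notin F).
Proof.
rewrite /outdeg; case: (boolP (i \in F)) => iF /=.
- by apply: big1 => j jF; rewrite mnm1E; case: eqP => // ij; rewrite -ij iF in jF.
- rewrite (bigD1 i) //= mnm1E eqxx big1 // => j /andP [_ ji].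
  by rewrite mnm1E eq_sym (negbTE ji).
Qed.

Lemma outdeg_setT m : outdeg setT m = 0%N.
Proof. by rewrite /outdeg big_pred0 // => i; rewrite in_setT. Qed.

Lemma outdeg_subset F G m : F \subset G -> (outdeg G m <= outdeg F m)%N.
Proof.
move=> FG; apply: (sub_le_big (@leqnn) (fun x y => leq_addr y x)) => i.
by apply: contra => iF; exact: (subsetP FG).
Qed.

Lemma mnm_le_outdeg F m i : i \notin F -> (m i <= outdeg F m)%N.
Proof. by move=> iF; rewrite /outdeg (bigD1 i) //= leq_addr. Qed.

Lemma outdeg_gt0 F m : (0 < outdeg F m)%N -> exists2 i, i \notin F & (0 < m i)%N.
Proof.
move=> m_gt0; apply: NNPP => no_i; move: m_gt0; rewrite /outdeg big1 // => i iF.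
by apply/eqP; rewrite -leqn0 leqNgt; apply/negP => mi; apply: no_i; exists i.
Qed.

Lemma outdeg_upward_closed F N : upward_closed (fun m => N <= outdeg F m)%N.
Proof. by move=> m m' Nm mm'; exact: leq_trans Nm (outdeg_lem _ mm'). Qed.

(* [PFexp F N] is the ideal (P_F)^N, described by its monomials: those of degree at least
   [N] in the variables x_i, i \notin F. *)
Definition PFexp F N := supp_in (fun m => N <= outdeg F m)%N.

Lemma PFexp_is_ideal F N : is_ideal (PFexp F N).
Proof. exact/supp_in_is_ideal/outdeg_upward_closed. Qed.

Lemma PFexp_le F N N' f : (N' <= N)%N -> PFexp F N f -> PFexp F N' f.
Proof. by move=> N'N Nf m /Nf; exact: leq_trans. Qed.

Lemma PFexp_mul F N N' f g : PFexp F N f -> PFexp F N' g -> PFexp F (N + N')%N (f * g).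
Proof. by move=> Nf N'g m /(supp_inM Nf N'g) [u [w [Nu N'w ->]]]; rewrite outdegD leq_add. Qed.

Lemma PFexp_expr F N t f : PFexp F N f -> PFexp F (N * t)%N (f ^+ t).
Proof.
move=> Nf; elim: t => [|t IH]; first by rewrite muln0.
by rewrite exprS mulnS; exact: PFexp_mul.
Qed.

Lemma PFexp_mpolyX F m : PFexp F (outdeg F m) 'X_[m].
Proof. exact: supp_inX. Qed.

Lemma ideal_pow_PFexp F N t f : ideal_pow (PFexp F N) t f -> PFexp F (t * N)%N f.
Proof.
elim: t f => [|t IH] f /=; first by rewrite mul0n.
apply: supp_in_ideal_gen; first exact: outdeg_upward_closed.
by move=> _ [g [h [Ng Nh ->]]]; rewrite mulSn addnC; apply: PFexp_mul => //; exact: IH.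
Qed.

Definition outdeg_part F e h : R :=
  \sum_(m <- msupp h | outdeg F m == e) h@_m *: 'X_[m].

Lemma mcoeff_outdeg_part F e h m :
  (outdeg_part F e h)@_m = if outdeg F m == e then h@_m else 0.
Proof.
rewrite /outdeg_part raddf_sum /=.
rewrite (eq_bigr (fun u => if u == m then h@_u else 0)); last first.
  by move=> u _; rewrite mcoeffZ mcoeffX; case: eqP; rewrite ?mulr1 ?mulr0.
case: (boolP (m \in msupp h)) => hm.
- rewrite big_mkcond (bigD1_seq m) ?msupp_uniq //= eqxx.
  rewrite big1 ?addr0; first by case: ifP.
  by move=> u um; rewrite (negbTE um); case: ifP.
- rewrite (memN_msupp_eq0 hm) if_same big1_seq // => u /andP [_ hu].
  by case: eqP => // um; rewrite -um hu in hm.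
Qed.

Lemma outdeg_partD F e f g : outdeg_part F e (f + g) = outdeg_part F e f + outdeg_part F e g.
Proof.
apply/mpolyP => m; rewrite mcoeffD !mcoeff_outdeg_part mcoeffD.
by case: ifP; rewrite ?addr0.
Qed.

Lemma outdeg_part_homog F e h : supp_in (fun m => outdeg F m = e) (outdeg_part F e h).
Proof.
move=> m; rewrite mcoeff_msupp mcoeff_outdeg_part.
by case: ifP => [/eqP //|_]; rewrite eqxx.
Qed.

Lemma outdeg_part_id F e h : supp_in (fun m => outdeg F m = e) h -> outdeg_part F e h = h.
Proof.
move=> eh; apply/mpolyP => m; rewrite mcoeff_outdeg_part; case: eqP => // ne.
by apply/esym/eqP; rewrite mcoeff_eq0; apply/negP => /eh.
Qed.

Lemma outdeg_part_eq0 F e h : PFexp F e.+1 h -> outdeg_part F e h = 0.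
Proof.
move=> eh; apply/mpolyP => m; rewrite mcoeff_outdeg_part mcoeff0.
case: eqP => // me; apply/eqP; rewrite mcoeff_eq0; apply/negP => /eh.
by rewrite me ltnn.
Qed.

Lemma PFexp_subr_outdeg_part F e h : PFexp F e h -> PFexp F e.+1 (h - outdeg_part F e h).
Proof.
move=> eh m; rewrite mcoeff_msupp mcoeffB mcoeff_outdeg_part.
case: ifP => [_|me]; first by rewrite subrr eqxx.
rewrite subr0 -mcoeff_msupp => /eh; rewrite leq_eqVlt => /orP [/eqP em|//].
by rewrite em eqxx in me.
Qed.

Lemma outdeg_partM F e e' f g : PFexp F e f -> PFexp F e' g ->
  outdeg_part F (e + e')%N (f * g) = outdeg_part F e f * outdeg_part F e' g.
Proof.
move=> ef e'g; set lf := outdeg_part F e f; set lg := outdeg_part F e' g.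
have elf : PFexp F e lf by move=> m /(outdeg_part_homog (e := e)) ->.
have -> : f * g = lf * lg + (lf * (g - lg) + (f - lf) * g) by ring.
rewrite outdeg_partD [X in _ + X]outdeg_part_eq0 ?addr0.
  apply: outdeg_part_id => m.
  move=> /(supp_inM (outdeg_part_homog (e := e) (h := f)) (outdeg_part_homog (e := e') (h := g))).
  by move=> [u [w [eu e'w ->]]]; rewrite outdegD eu e'w.
have [_ PFexpD _] := PFexp_is_ideal F (e + e')%N.+1; apply: PFexpD.
- by rewrite -addnS; apply: PFexp_mul => //; exact: PFexp_subr_outdeg_part.
- by rewrite -addSn; apply: PFexp_mul => //; exact: PFexp_subr_outdeg_part.
Qed.

Lemma outdeg_part_expr F e t f : PFexp F e f ->
  outdeg_part F (e * t)%N (f ^+ t) = outdeg_part F e f ^+ t.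
Proof.
move=> ef; elim: t => [|t IH].
  rewrite muln0 !expr0 outdeg_part_id // => m.
  by rewrite -mpolyX0 msuppX mem_seq1 => /eqP ->; exact: outdeg0.
by rewrite mulnS !exprS outdeg_partM ?IH //; exact: PFexp_expr.
Qed.

Lemma PFexpN_order F N h : ~ PFexp F N h ->
  exists e, [/\ (e < N)%N, PFexp F e h & outdeg_part F e h != 0].
Proof.
move=> Nh; have ex_e : exists e, has (fun m => outdeg F m == e) (msupp h).
  have h_neq0 : h != 0 by apply: contra_notN Nh => /eqP ->; exact: supp_in0.
  by exists (outdeg F (mlead h)); apply/hasP; exists (mlead h); rewrite ?mlead_supp.
case: (ex_minnP ex_e) => e /hasP [m hm /eqP me] e_min.
have eh : PFexp F e h by move=> u hu; apply: e_min; apply/hasP; exists u.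
exists e; split=> //.
- by rewrite ltnNge; apply: contra_notN Nh => Ne; exact: PFexp_le eh.
- apply/negP => /eqP /mpolyP /(_ m); rewrite mcoeff_outdeg_part me eqxx mcoeff0 => /eqP.
  by rewrite mcoeff_eq0 hm.
Qed.

Lemma PF_PFexp1 F f : PF F f <-> PFexp F 1%N f.
Proof.
split.
- apply: supp_in_ideal_gen; first exact: outdeg_upward_closed.
  by move=> _ [i [iF ->]]; have := PFexp_mpolyX F (m := U_(i)%MM); rewrite outdeg1 iF.
- move=> f1; rewrite (mpolyE f); apply: ideal_sum; first exact: ideal_gen_is_ideal.
  move=> m /f1 /outdeg_gt0 [i iF mi].
  have im : (U_(i) <= m)%MM by rewrite lep1mP -lt0n.
  rewrite -(submK im) mpolyXD scalerAl; apply: ideal_mulr; first exact: ideal_gen_is_ideal.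
  by apply: ideal_gen_mem; exists i.
Qed.

Lemma outdeg_part0_neq0 F g : ~ PF F g -> outdeg_part F 0%N g != 0.
Proof.
move=> Fg; have /PFexpN_order [[|e] [e_lt1 _ ge]] // : ~ PFexp F 1%N g by move/PF_PFexp1.
Qed.

(* Multiplication by [g \notin P_F] preserves the order, since the lowest parts multiply. *)
Lemma PFexp_cancel F N g f : ~ PF F g -> PFexp F N (g * f) -> PFexp F N f.
Proof.
move=> Fg Ngf; apply: NNPP => /PFexpN_order [e [eN ef fe]].
have := mulf_neq0 (outdeg_part0_neq0 Fg) fe.
rewrite -outdeg_partM ?add0n // outdeg_part_eq0 ?eqxx //.
exact: PFexp_le Ngf.
Qed.

Lemma PF_prime F : is_prime_ideal (@PF k n F).
Proof.
split; first exact: ideal_gen_is_ideal.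
- move/PF_PFexp1/(_ 0%MM); rewrite -mpolyX0 msuppX mem_seq1 eqxx outdeg0.
  by move=> /(_ isT).
- move=> f g /PF_PFexp1 fg; apply: NNPP => /not_or_and [Ff Fg]; apply: Ff.
  by apply/PF_PFexp1; apply: PFexp_cancel Fg _; rewrite mulrC.
Qed.

(* If f has order e < N, the part of outdeg e m of [f^m + a_1 f^(m-1) + ... + a_m] is the
   nonzero (lowest part of f)^m, as the a_i f^(m-i) have order > e m. *)
Lemma PFexp_integrally_closed F N : integrally_closed (PFexp F N).
Proof.
move=> f [m [a [m_gt0 Na eq_f]]]; apply: NNPP => /PFexpN_order [e [eN ef fe]].
have high : PFexp F (e * m)%N.+1 (\sum_(1 <= i < m.+1) a i * f ^+ (m - i)).
  rewrite big_nat_cond; apply: big_ind; [exact: supp_in0 | by move=> ? ?; exact: supp_inD |].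
  move=> i /andP [/andP [i_gt0 im] _]; have i_le_m : (1 <= i <= m)%N by rewrite i_gt0.
  apply: PFexp_le _ (PFexp_mul (ideal_pow_PFexp (Na i i_le_m)) (PFexp_expr (t := m - i) ef)).
  have : (e * i < i * N)%N by rewrite mulnC ltn_pmul2l.
  have : (e * (m - i) + e * i = e * m)%N by rewrite -mulnDr subnK.
  lia.
have := congr1 (outdeg_part F (e * m)%N) eq_f.
rewrite outdeg_partD (outdeg_part_eq0 high) addr0 outdeg_part_expr // => /eqP.
by rewrite (outdeg_part_id (supp_in0 _)) expf_eq0 (negbTE fe) andbF.
Qed.

End PFPowers.

(** * Components of a monomial ideal *)

Section Components.
Variables (k : fieldType) (n : nat).
Local Notation R := {mpoly k[n]}.
Implicit Types (F G : {set 'I_n}) (m s : 'X_{1..n}) (f g : R) (I : R -> Prop).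

Definition outpart F m : 'X_{1..n} := [multinom (if i \in F then 0%N else m i) | i < n].
Definition inpart F m : 'X_{1..n} := [multinom (if i \in F then m i else 0%N) | i < n].

Lemma outpart_inpart F m : (outpart F m + inpart F m)%MM = m.
Proof.
apply/mnmP => i; rewrite mnmDE !mnmE.
by case: ifP; rewrite ?add0n ?addn0.
Qed.

Lemma outdeg_inpart F m : outdeg F (inpart F m) = 0%N.
Proof. by rewrite /outdeg big1 // => i iF; rewrite mnmE (negbTE iF). Qed.

Lemma mdeg_outpart F m : mdeg (outpart F m) = outdeg F m.
Proof.
rewrite mdegE /outdeg [in RHS]big_mkcond /=; apply: eq_bigr => i _.
by rewrite mnmE; case: ifP.
Qed.

Lemma PF_subset F G f : F \subset G -> PF G f -> PF F f.
Proof.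
move=> FG /PF_PFexp1 Gf; apply/PF_PFexp1 => m /Gf.
by move/leq_trans; apply; exact: outdeg_subset.
Qed.

Lemma PF_X F i : i \notin F -> PF F ('X_i : R).
Proof. by move=> iF; apply: ideal_gen_mem; exists i. Qed.

Lemma PF_mpolyXN F m : outdeg F m = 0%N -> ~ PF F ('X_[m] : R).
Proof. by move=> m0 /PF_PFexp1 /(_ m); rewrite msuppX mem_seq1 eqxx m0 => /(_ isT). Qed.

Lemma PF_XN F i : i \in F -> ~ PF F ('X_i : R).
Proof. by move=> iF; apply: PF_mpolyXN; rewrite outdeg1 iF. Qed.

Section MinimalPrimes.
Variable I : R -> Prop.

Lemma in_calF_sub F f : in_calF I F -> I f -> PF F f.
Proof. by case=> _ IF _; exact: IF. Qed.

Lemma sub_IF F f : I f -> IF I F f.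
Proof. by apply: sub_iso_component; case: (PF_prime k F). Qed.

Lemma IF1N F : in_calF I F -> ~ IF I F 1.
Proof.
move=> calF [g [Fg Ig]]; apply: Fg; rewrite -[g]mulr1.
exact: in_calF_sub calF Ig.
Qed.

Lemma IF_outpart F m : IF I F 'X_[m] -> IF I F 'X_[outpart F m].
Proof.
move=> [g [Fg Igm]]; exists (g * 'X_[inpart F m]); split.
- have [_ _ Fprime] := PF_prime k F.
  by case/Fprime => //; apply: PF_mpolyXN; exact: outdeg_inpart.
- by rewrite -mulrA -mpolyXD addmC outpart_inpart.
Qed.

Hypothesis monI : monomial_ideal I.

(* Otherwise the prime P_G, G = F + {l}, would contain I: a generator x^s of I outside P_G has
   [outpart F s] a power of x_l.  But P_G is strictly smaller than P_F. *)
Lemma exists_IF_pure_power F l : in_calF I F -> l \notin F ->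
  exists a, IF I F 'X_[U_(l) *+ a].
Proof.
move=> calF lF; apply: NNPP => no_power; pose G := l |: F.
have IG f : I f -> PF G f.
  case: monI => S eqI /eqI; apply: ideal_gen_min; first exact: ideal_gen_is_ideal.
  move=> _ [s [Ss ->]]; apply/PF_PFexp1; apply: supp_inX => /=.
  rewrite lt0n; apply/negP => /eqP s0.
  apply: no_power; exists (s l).
  have -> : (U_(l) *+ s l)%MM = outpart F s.
    apply/mnmP => i; rewrite mulmnE mnm1E mnmE.
    case: (eqVneq l i) => [<-|li]; first by rewrite (negbTE lF) mul1n.
    case: ifP => // iF; apply/esym/eqP; rewrite -leqn0 -s0 mnm_le_outdeg //.
    by rewrite in_setU1 negb_or iF eq_sym li.
  by apply/IF_outpart/sub_IF/eqI/ideal_gen_mem; exists s.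
case: calF => _ _ /(_ (PF G) (PF_prime k G) IG) min_F.
have /min_F : forall f, PF G f -> PF F f by move=> f; apply: PF_subset; exact: subsetUr.
by move/(_ _ (PF_X lF)); apply: PF_XN; rewrite in_setU1 eqxx.
Qed.

Lemma in_calF_incomparable F G : in_calF I F -> in_calF I G -> F != G ->
  exists2 l, l \in F & l \notin G.
Proof.
move=> calF calG FG; apply: NNPP => no_l; have FsubG : F \subset G.
  by apply/subsetP => x xF; apply: NNPP => xG; apply: no_l; exists x => //; exact/negP.
have PF_PG f : PF F f -> PF G f.
  case: calF => _ _; apply; first exact: PF_prime.
  - by move=> g; exact: in_calF_sub calG.
  - by move=> g; exact: PF_subset.
move/negP: FG; apply; rewrite eqEsubset FsubG; apply/subsetP => x xG.
by apply: NNPP => xF; apply: (PF_XN xG); apply: PF_PG; apply: PF_X; exact/negP.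
Qed.

Section Generators.
Variables (F : {set 'I_n}) (d : nat) (S : 'X_{1..n} -> Prop).
Hypothesis Sdeg : forall m, S m -> mdeg m = d.
Hypothesis eqIF : forall f, IF I F f <-> ideal_gen (fun g => exists m, S m /\ g = 'X_[m]) f.

Lemma IF_supp f : IF I F f -> supp_in (fun m => exists2 s, S s & (s <= m)%MM) f.
Proof. by move/eqIF; exact: supp_in_monomial_gen. Qed.

Lemma IF_mpolyX_gen s : S s -> IF I F 'X_[s].
Proof. by move=> Ss; apply/eqIF/ideal_gen_mem; exists s. Qed.

Lemma IF_mpolyX_outdeg m : IF I F 'X_[m] -> (d <= outdeg F m)%N.
Proof.
move/IF_outpart/IF_supp/(_ (outpart F m)); rewrite msuppX mem_seq1 eqxx.
by move=> /(_ isT) [s /Sdeg <- sm]; rewrite -mdeg_outpart -(submK sm) mdegD leq_addl.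
Qed.

Lemma IF_PFexp f : IF I F f -> PFexp F d f.
Proof.
move/eqIF; apply: supp_in_ideal_gen; first exact: outdeg_upward_closed.
by move=> _ [s [Ss ->]]; apply: supp_inX; apply: IF_mpolyX_outdeg; exact: IF_mpolyX_gen.
Qed.

Hypothesis calF : in_calF I F.

(* A pure power of x_l in I_F is divisible by a generator, which has degree d. *)
Lemma IF_pure_power l : l \notin F -> IF I F 'X_[U_(l) *+ d].
Proof.
move=> lF; have [a /IF_supp] := exists_IF_pure_power calF lF.
move=> /(_ (U_(l) *+ a)%MM); rewrite msuppX mem_seq1 eqxx => /(_ isT) [s Ss /mnm_lepP sa].
have s_off_l i : i != l -> s i = 0%N.
  by move=> il; have := sa i; rewrite mulmnE mnm1E eq_sym (negbTE il) mul0n leqn0 => /eqP.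
suff -> : (U_(l) *+ d)%MM = s by exact: IF_mpolyX_gen.
apply/mnmP => i; rewrite mulmnE mnm1E; case: (eqVneq l i) => [<-|li]; last first.
  by rewrite mul0n s_off_l // eq_sym.
by rewrite mul1n -(Sdeg Ss) mdegE (bigD1 l) //= big1 ?addn0 // => j /s_off_l.
Qed.

Lemma degree_gt0 l : l \notin F -> (0 < d)%N.
Proof.
move=> lF; rewrite lt0n; apply/eqP => d0; apply: (IF1N calF).
by have := IF_pure_power lF; rewrite d0 mulm0n mpolyX0.
Qed.

End Generators.
End MinimalPrimes.
End Components.

(** * Sufficiency *)

Section Sufficiency.
Variables (k : fieldType) (n : nat).
Local Notation R := {mpoly k[n]}.
Implicit Types (F : {set 'I_n}) (m a c r : 'X_{1..n}) (f g : R) (I : R -> Prop).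

Lemma mdeg_gt0 m : (0 < mdeg m)%N -> exists i, (0 < m i)%N.
Proof.
move=> m_gt0; apply: NNPP => no_i; move: m_gt0; rewrite mdegE big1 // => i _.
by apply/eqP; rewrite -leqn0 leqNgt; apply/negP => mi; apply: no_i; exists i.
Qed.

Lemma exists_lem_mdeg m N : (N <= mdeg m)%N -> exists2 c, (c <= m)%MM & mdeg c = N.
Proof.
elim: N => [|N IH] Nm; first by exists 0%MM; [apply/mnm_lepP => i; rewrite mnm0E | exact: mdeg0].
have [c cm dc] := IH (ltnW Nm).
have [i ci] : exists i, (c i < m i)%N.
  apply: NNPP => no_i; move: Nm; rewrite -dc ltnNge; apply/negP/negPn.
  rewrite !mdegE; apply: leq_sum => i _; rewrite leqNgt; apply/negP => ci.
  by apply: no_i; exists i.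
exists (c + U_(i))%MM; last by rewrite mdegD mdeg1 dc addn1.
apply/mnm_lepP => j; rewrite mnmDE mnm1E; move/mnm_lepP: cm => /(_ j).
by case: (eqVneq i j) => [<-|_]; rewrite ?addn1 ?addn0.
Qed.

Definition vanishes_on F m := forall i, i \in F -> m i = 0%N.

Lemma vanishes_on_lem F m m' : (m <= m')%MM -> vanishes_on F m' -> vanishes_on F m.
Proof. by move=> /mnm_lepP mm' m'F i /m'F m'i; apply/eqP; rewrite -leqn0 -m'i mm'. Qed.

(* [c = a *+ e + r] writes [x^c] as a product of t monomials [x_i^e x_j], i running over [a]
   and j over [r]; [a] exists because the quotients [c_i / e] have total degree at least t
   when [t >= n e]. *)
Lemma exists_pieces_decomposition e t c : (n * e <= t)%N -> mdeg c = (e.+1 * t)%N ->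
  exists a r, [/\ (a <= c)%MM, c = (a *+ e + r)%MM, mdeg a = t & mdeg r = t].
Proof.
move=> tn dc; pose E := maxn e 1.
have E_gt0 : (0 < E)%N by rewrite leq_max orbT.
pose b := [multinom (c i %/ E)%N | i < n].
have eb_le_c i : (e * b i <= c i)%N.
  rewrite mnmE; apply: leq_trans (leq_trunc_div (c i) E).
  by rewrite mulnC leq_mul2l leq_maxl orbT.
have b_le_c i : (b i <= c i)%N by rewrite mnmE leq_div.
have tb : (t <= mdeg b)%N.
  have cE : (mdeg c <= E * mdeg b + n * E.-1)%N.
    have -> : (n * E.-1 = \sum_(i < n) E.-1)%N by rewrite sum_nat_const card_ord.
    rewrite !mdegE big_distrr /= -big_split /=.
    apply: leq_sum => i _; rewrite mnmE.
    have := divn_eq (c i) E; have := ltn_pmod (c i) E_gt0.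
    move: (c i %/ E)%N (c i %% E)%N => q rem rem_lt ->; nia.
  move: cE; rewrite dc /E; case: (leqP e 1) => [e_le1|e_gt1]; nia.
have [a ab da] := exists_lem_mdeg tb.
have ac : (a *+ e <= c)%MM.
  apply/mnm_lepP => i; rewrite mulmnE mulnC; apply: leq_trans (eb_le_c i).
  by rewrite leq_mul2l (mnm_lepP ab _) orbT.
exists a, (c - a *+ e)%MM; split=> //.
- by apply: lepm_trans ab _; apply/mnm_lepP.
- by rewrite addmC submK.
- by have := mdegD (c - a *+ e) (a *+ e); rewrite submK // mdegMn da dc; lia.
Qed.

Section Pieces.
Variables (I : R -> Prop) (F : {set 'I_n}) (e : nat).
Hypothesis pieces : forall i j, i \notin F -> j \notin F -> IF I F 'X_[U_(i) *+ e + U_(j)].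

Lemma iso_component_pow_pieces t a r : vanishes_on F a -> vanishes_on F r ->
  mdeg a = t -> mdeg r = t -> iso_component (ideal_pow I t) (PF F) 'X_[a *+ e + r].
Proof.
elim: t a r => [|t IH] a r aF rF da dr.
  move/eqP: da dr; rewrite mdeg_eq0 => /eqP -> /eqP; rewrite mdeg_eq0 => /eqP ->.
  have -> : (0 *+ e + 0 = 0 :> 'X_{1..n})%MM by apply/mnmP => x; rewrite mnmDE mulmnE !mnm0E.
  by rewrite mpolyX0; exists 1; split=> //; case: (PF_prime k F).
have [i ai] := mdeg_gt0 (leq_trans (ltn0Sn t) (eq_leq (esym da))).
have [j rj] := mdeg_gt0 (leq_trans (ltn0Sn t) (eq_leq (esym dr))).
have iF : i \notin F by apply/negP => /aF ai0; rewrite ai0 in ai.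
have jF : j \notin F by apply/negP => /rF rj0; rewrite rj0 in rj.
have Ui_a : (U_(i) <= a)%MM by rewrite lep1mP -lt0n.
have Uj_r : (U_(j) <= r)%MM by rewrite lep1mP -lt0n.
have -> : (a *+ e + r = ((a - U_(i)) *+ e + (r - U_(j))) + (U_(i) *+ e + U_(j)))%MM.
  apply/mnmP => x; move/mnm_lepP: Ui_a => /(_ x); move/mnm_lepP: Uj_r => /(_ x).
  by rewrite !(mnmDE, mulmnE, mnmBE); nia.
rewrite mpolyXD; apply: iso_component_pow_mul; [exact: PF_prime | apply: IH | exact: pieces iF jF].
- by apply: vanishes_on_lem aF; exact: lem_subr.
- by apply: vanishes_on_lem rF; exact: lem_subr.
- by have := mdegD (a - U_(i)) U_(i); rewrite submK // mdeg1 da addn1 => -[].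
- by have := mdegD (r - U_(j)) U_(j); rewrite submK // mdeg1 dr addn1 => -[].
Qed.

Lemma PFexp_sub_iso_component t f : (n * e <= t)%N -> PFexp F (e.+1 * t)%N f ->
  iso_component (ideal_pow I t) (PF F) f.
Proof.
move=> tn Nf; have comp_ideal := iso_component_pow_is_ideal I t (PF_prime k F).
rewrite (mpolyE f); apply: ideal_sum => // m /Nf m_large.
rewrite -mul_mpolyC; apply: ideal_mulr => //.
have [c c_out dc] : exists2 c, (c <= outpart F m)%MM & mdeg c = (e.+1 * t)%N.
  by apply: exists_lem_mdeg; rewrite mdeg_outpart.
have cm : (c <= m)%MM.
  by apply: lepm_trans c_out _; rewrite -{2}(outpart_inpart F m); exact: lem_addr.
have cF : vanishes_on F c.
  by move=> i iF; apply/eqP; rewrite -leqn0; move/mnm_lepP: c_out => /(_ i); rewrite mnmE iF.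
have [a [r [ac eq_c da dr]]] := exists_pieces_decomposition tn dc.
apply: (ideal_mpolyX_lem comp_ideal _ cm); rewrite eq_c.
apply: iso_component_pow_pieces da dr; first exact: vanishes_on_lem cF.
by apply: vanishes_on_lem cF; rewrite eq_c; exact: lem_addl.
Qed.

End Pieces.

Lemma iso_component_pow_PFexp I F N t f : (forall g, I g -> PFexp F N g) ->
  iso_component (ideal_pow I t) (PF F) f -> PFexp F (t * N)%N f.
Proof.
move=> IN [g [Fg Igf]]; apply: PFexp_cancel Fg _.
by apply: ideal_pow_PFexp; exact: ideal_pow_sub Igf.
Qed.

Lemma symbolic_power_integrally_closed I t :
  (forall F, in_calF I F -> integrally_closed (iso_component (ideal_pow I t) (PF F))) ->
  integrally_closed (symbolic_power I t).
Proof.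
move=> comp_closed f If F calF; apply: (comp_closed F calF).
by apply: integral_over_ideal_sub If => g; apply.
Qed.

Section Component.
Variables (I : R -> Prop) (F : {set 'I_n}) (d : nat).
Hypotheses (monI : monomial_ideal I) (calF : in_calF I F).
Hypothesis genIF : gen_by_monomials_of_degree (IF I F) d.
Hypothesis pieces : forall i j, i \notin F -> j \notin F -> IF I F ('X_i ^+ d.-1 * 'X_j).

(* For t large the component of I^t at P_F is (P_F)^(dt), or 0 when P_F = 0. *)
Lemma iso_component_pow_integrally_closed t : (0 < t)%N -> (n * d <= t)%N ->
  integrally_closed (iso_component (ideal_pow I t) (PF F)).
Proof.
move=> t_gt0 tn; have [S [Sdeg eqIF]] := genIF.
have comp_ideal := iso_component_pow_is_ideal I t (PF_prime k F).
case: (eqVneq F setT) => [FT|FnT].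
- apply: (integrally_closed_eq (K := PFexp F t)); last exact: PFexp_integrally_closed.
  have IPF g : I g -> PFexp F 1%N g by move=> Ig; apply/PF_PFexp1; exact: in_calF_sub calF Ig.
  move=> f; split; first by move/(iso_component_pow_PFexp IPF); rewrite muln1.
  move=> tf; suff -> : f = 0 by case: comp_ideal.
  apply/mpolyP => m; rewrite mcoeff0; apply: memN_msupp_eq0; apply/negP => /tf.
  by rewrite FT outdeg_setT leqn0 => /eqP t0; rewrite t0 in t_gt0.
- have [l lF] : exists l, l \notin F.
    apply: NNPP => no_l; move/negP: FnT; apply; apply/eqP/setP => x; rewrite in_setT.
    by apply: NNPP => xF; apply: no_l; exists x; exact/negP.
  have d_gt0 := degree_gt0 monI Sdeg eqIF calF lF.
  apply: (integrally_closed_eq (K := PFexp F (d * t)%N)); last exact: PFexp_integrally_closed.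
  have Id g : I g -> PFexp F d g by move=> Ig; apply: (IF_PFexp Sdeg eqIF); exact: sub_IF.
  move=> f; split; first by move/(iso_component_pow_PFexp Id); rewrite mulnC.
  rewrite -(prednK d_gt0); apply: PFexp_sub_iso_component.
  + by move=> i j iF jF; rewrite mpolyXD -mpolyXn; exact: pieces.
  + by apply: leq_trans tn; rewrite leq_mul2l leq_pred orbT.
Qed.

End Component.

Lemma integrally_closed_symbolic_power_eventually I (d : {set 'I_n} -> nat) :
  monomial_ideal I ->
  (forall F, in_calF I F -> gen_by_monomials_of_degree (IF I F) (d F)) ->
  (forall F, in_calF I F -> forall i j, i \notin F -> j \notin F ->
      IF I F ('X_i ^+ (d F).-1 * 'X_j)) ->
  exists t0, forall t, (t0 <= t)%N -> integrally_closed (symbolic_power I t).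
Proof.
move=> monI genIF pieces; exists (n * \max_F d F).+1 => t tn.
apply: symbolic_power_integrally_closed => F calF.
apply: (iso_component_pow_integrally_closed monI calF (genIF F calF) (pieces F calF)).
- exact: leq_trans tn.
- by apply: leq_trans (ltnW tn); rewrite leq_mul2l leq_bigmax orbT.
Qed.

End Sufficiency.

(** * Necessity *)

Section GenFactors.
Variables (k : fieldType) (n : nat).
Local Notation R := {mpoly k[n]}.
Implicit Types (F G : {set 'I_n}) (m s u : 'X_{1..n}) (f g : R) (I : R -> Prop).

Fixpoint gen_factors (S : 'X_{1..n} -> Prop) t m : Prop :=
  if t is t'.+1 then exists s, [/\ S s, (s <= m)%MM & gen_factors S t' (m - s)%MM]
  else True.

Lemma gen_factors_upward_closed S t : upward_closed (gen_factors S t).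
Proof.
elim: t => [|t IH] m m' //= [s [Ss sm Sms]] mm'; exists s; split=> //.
  exact: lepm_trans mm'.
apply: IH Sms _; apply/mnm_lepP => x; rewrite !mnmBE; move/mnm_lepP: mm' => /(_ x).
lia.
Qed.

Lemma supp_ideal_pow_gen_factors I S t f :
  (forall f, I f <-> ideal_gen (fun g => exists m, S m /\ g = 'X_[m]) f) ->
  ideal_pow I t f -> supp_in (gen_factors S t) f.
Proof.
move=> eqI; elim: t f => [|t IH] f; first by move=> _ m _.
apply: supp_in_ideal_gen; first exact: gen_factors_upward_closed.
move=> _ [a [b [Ia /eqI/supp_in_monomial_gen Sb ->]]].
move=> m /(supp_inM (IH a Ia) Sb) [u [w [Su [s Ss sw] ->]]]; exists s; split=> //.
- by apply: lepm_trans sw _; exact: lem_addl.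
- apply: (gen_factors_upward_closed Su); apply/mnm_lepP => x; rewrite mnmBE mnmDE.
  by move/mnm_lepP: sw => /(_ x); lia.
Qed.

Lemma outdeg_gen_factors S F N t m : (forall s, S s -> N <= outdeg F s)%N ->
  gen_factors S t m -> (N * t <= outdeg F m)%N.
Proof.
move=> SN; elim: t m => [|t IH] m /=; first by rewrite muln0.
move=> [s [Ss sm /IH]]; rewrite outdegB // mulnS.
by have := SN s Ss; have := outdeg_lem F sm; lia.
Qed.

Section Piece.
Variables (I : R -> Prop) (S : 'X_{1..n} -> Prop) (F : {set 'I_n}) (e : nat) (i j : 'I_n).
Hypothesis eqI : forall f, I f <-> ideal_gen (fun g => exists m, S m /\ g = 'X_[m]) f.
Hypothesis Sdeg : forall s, S s -> (e.+1 <= outdeg F s)%N.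
Hypotheses (ij : i != j) (iF : i \notin F) (jF : j \notin F).

Let supp_ij m := forall x, x \notin F -> x != i -> x != j -> m x = 0%N.

Lemma outdeg_supp_ij m : supp_ij m -> outdeg F m = (m i + m j)%N.
Proof.
move=> ijm; rewrite /outdeg (bigD1 i) //= (bigD1 j) /=; last by rewrite jF eq_sym.
by rewrite big1 ?addn0 // => x /andP [/andP [xF xi] xj]; exact: ijm.
Qed.

(* The t generators dividing [m] have outdeg at least e+1 each, and [m] has outdeg at most
   (e+1)t; so the generator containing x_j is x_i^e x_j times variables of F. *)
Lemma IF_piece_of_gen_factors t m : gen_factors S t m -> supp_ij m -> m j = 1%N ->
  (m i + 1 <= e.+1 * t)%N -> IF I F 'X_[U_(i) *+ e + U_(j)].
Proof.
elim: t m => [|t IH] m /=; first by move=> _ _ _; rewrite muln0; lia.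
move=> [s [Ss /mnm_lepP sm Sms]] ijm mj mi.
have ijs : supp_ij s by move=> x xF xi xj; have := sm x; rewrite ijm // leqn0 => /eqP.
have ijms : supp_ij (m - s)%MM by move=> x xF xi xj; rewrite mnmBE ijm.
have := Sdeg Ss; rewrite outdeg_supp_ij // => s_large.
have := sm j; have := sm i; rewrite mj => si_le sj_le.
case: (posnP (s j)) => [sj0|sj_gt0].
  by apply: (IH _ Sms ijms); rewrite !mnmBE ?sj0 ?mj; lia.
have := outdeg_gen_factors Sdeg Sms; rewrite outdeg_supp_ij // !mnmBE mj => ms_large.
have si : s i = e by nia.
suff -> : (U_(i) *+ e + U_(j))%MM = outpart F s.
  by apply/IF_outpart/sub_IF/eqI/ideal_gen_mem; exists s.
apply/mnmP => x; rewrite mnmDE mulmnE !mnm1E mnmE.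
case: ifP => [xF|/negbT xF].
  have -> : (i == x) = false by apply: contraNF iF => /eqP ->.
  by have -> : (j == x) = false by apply: contraNF jF => /eqP ->.
case: (eqVneq i x) => [<-|ix]; first by rewrite eq_sym (negbTE ij) si mul1n addn0.
case: (eqVneq j x) => [<-|jx]; first by lia.
by rewrite ijs // eq_sym.
Qed.

Lemma IF_piece_of_iso_component t u :
  (forall x, x \notin F -> u x = (U_(i) *+ (e.+1 * t + e) + U_(j))%MM x) ->
  iso_component (ideal_pow I t.+1) (PF F) 'X_[u] -> IF I F 'X_[U_(i) *+ e + U_(j)].
Proof.
move=> u_out [g [Fg Igu]].
have [w gw w0] : exists2 w, w \in msupp g & outdeg F w = 0%N.
  apply: NNPP => no_w; apply: Fg; apply/PF_PFexp1 => w gw; rewrite lt0n; apply/negP => /eqP w0.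
  by apply: no_w; exists w.
have w_off x : x \notin F -> w x = 0%N.
  by move=> xF; apply/eqP; rewrite -leqn0 -w0; exact: mnm_le_outdeg.
have uw : (u + w)%MM \in msupp (g * 'X_[u]).
  by rewrite mcoeff_msupp mcoeffMX -mcoeff_msupp.
apply: (IF_piece_of_gen_factors (supp_ideal_pow_gen_factors eqI Igu uw)).
- move=> x xF xi xj; rewrite mnmDE u_out // w_off // mnmDE mulmnE !mnm1E.
  by rewrite eq_sym (negbTE xi) eq_sym (negbTE xj).
- by rewrite mnmDE u_out // w_off // mnmDE mulmnE !mnm1E (negbTE ij) eqxx.
- by rewrite mnmDE u_out // w_off // mnmDE mulmnE !mnm1E eqxx eq_sym (negbTE ij); lia.
Qed.

End Piece.
End GenFactors.

Section Necessity.
Variables (k : fieldType) (n : nat).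
Local Notation R := {mpoly k[n]}.
Implicit Types (F G : {set 'I_n}) (u : 'X_{1..n}).

Variables (I : R -> Prop) (d : {set 'I_n} -> nat).
Hypothesis monI : monomial_ideal I.
Hypothesis genIF : forall F, in_calF I F -> gen_by_monomials_of_degree (IF I F) (d F).

(* For G <> F there is some l \in F \ G, and x_l^(d_G) lies in I_G. *)
Lemma symbolic_power_mpolyX F t u : in_calF I F ->
  (forall x, x \in F -> t * \max_G d G <= u x)%N ->
  iso_component (ideal_pow I t) (PF F) 'X_[u] -> symbolic_power I t 'X_[u].
Proof.
move=> calF u_large Fu G calG; case: (eqVneq G F) => [-> //|GF].
rewrite eq_sym in GF; have [l lF lG] := in_calF_incomparable calF calG GF.
have [S [Sdeg eqIG]] := genIF calG.
have := iso_component_pow_expr t (PF_prime k G) (IF_pure_power monI Sdeg eqIG calG lG).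
rewrite mpolyXn => /(ideal_mpolyX_lem (iso_component_pow_is_ideal I t (PF_prime k G))).
apply; apply/mnm_lepP => x; rewrite !mulmnE mnm1E.
case: (eqVneq l x) => [<-|_]; last by rewrite !mul0n.
by rewrite mul1n mulnC; apply: leq_trans (u_large l lF); rewrite leq_mul2l leq_bigmax orbT.
Qed.

Variables (F : {set 'I_n}) (e t : nat) (i j : 'I_n).
Hypotheses (calF : in_calF I F) (de : d F = e.+1) (iF : i \notin F) (jF : j \notin F).

Let h : 'X_{1..n} := [multinom if x \in F then (t.+1 * \max_G d G)%N else 0%N | x < n].

(* With u1 = x_i^(d(t+1)) h and u2 = x_i^(dt) x_j^d h in I^(t+1), the monomial
   u = x_i^(d(t+1)-1) x_j h satisfies u^d = u1^(d-1) u2. *)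
Lemma integral_symbolic_power_piece :
  integral_over_ideal (symbolic_power I t.+1) 'X_[U_(i) *+ (e.+1 * t + e) + U_(j) + h].
Proof.
have [S [Sdeg eqIF]] := genIF calF; rewrite de in Sdeg eqIF.
have Fi := IF_pure_power monI Sdeg eqIF calF iF.
have Fj := IF_pure_power monI Sdeg eqIF calF jF.
have comp_ideal := iso_component_pow_is_ideal I t.+1 (PF_prime k F).
have h_large u x : x \in F -> (t.+1 * \max_G d G <= (u + h)%MM x)%N.
  by move=> xF; rewrite mnmDE mnmE xF leq_addl.
apply: (integral_over_ideal_expr (ltn0Sn e)).
have -> : 'X_[U_(i) *+ (e.+1 * t + e) + U_(j) + h] ^+ e.+1 =
    'X_[(U_(i) *+ e.+1) *+ t.+1 + h] ^+ e * 'X_[(U_(i) *+ e.+1) *+ t + U_(j) *+ e.+1 + h] :> R.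
  rewrite !mpolyXn -mpolyXD; congr 'X_[_]; apply/mnmP => x.
  by rewrite !(mnmDE, mulmnE, mnm1E); case: (i == x); case: (j == x); nia.
apply: ideal_pow_mul; first apply: ideal_pow_expr.
all: apply: (symbolic_power_mpolyX calF (h_large _)).
all: rewrite mpolyXD; apply: ideal_mull comp_ideal _.
- by rewrite -mpolyXn; exact: iso_component_pow_expr (PF_prime k F) Fi.
- rewrite mpolyXD -mpolyXn; apply: iso_component_pow_mul Fj; first exact: PF_prime.
  exact: iso_component_pow_expr (PF_prime k F) Fi.
Qed.

Lemma IF_piece_of_symbolic_power : integrally_closed (symbolic_power I t.+1) ->
  IF I F 'X_[U_(i) *+ e + U_(j)].
Proof.
move=> closed_sym; case: (eqVneq i j) => [<-|ij].
  have [S [Sdeg eqIF]] := genIF calF; rewrite de in Sdeg eqIF.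
  by rewrite -mulmSr; have := IF_pure_power monI Sdeg eqIF calF iF.
have [SI eqI] := monI.
have SIdeg s : SI s -> (e.+1 <= outdeg F s)%N.
  move=> SIs; have [SF [SFdeg eqIF]] := genIF calF; rewrite -de.
  by apply: (IF_mpolyX_outdeg SFdeg eqIF); apply/sub_IF/eqI/ideal_gen_mem; exists s.
apply: (IF_piece_of_iso_component eqI SIdeg ij iF jF
          (u := U_(i) *+ (e.+1 * t + e) + U_(j) + h)).
  by move=> x xF; rewrite mnmDE /h mnmE (negbTE xF) addn0.
exact: closed_sym integral_symbolic_power_piece F calF.
Qed.

End Necessity.

Theorem proposition3p6 (k : fieldType) (n : nat) (I : {mpoly k[n]} -> Prop)
    (d : {set 'I_n} -> nat) :
  monomial_ideal I ->
  (forall F, in_calF I F -> gen_by_monomials_of_degree (IF I F) (d F)) ->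
  ((exists t0 : nat, forall t : nat, (t0 <= t)%N -> integrally_closed (symbolic_power I t))
   <->
   (forall F, in_calF I F -> forall i j : 'I_n, i \notin F -> j \notin F ->
      IF I F ('X_i ^+ (d F).-1 * 'X_j))).
Proof.
move=> monI genIF; split; last exact: integrally_closed_symbolic_power_eventually.
move=> [t0 closed_sym] F calF i j iF jF.
have [S [Sdeg eqIF]] := genIF F calF.
have de : d F = (d F).-1.+1 by rewrite prednK // (degree_gt0 monI Sdeg eqIF calF iF).
rewrite mpolyXn -mpolyXD.
exact (IF_piece_of_symbolic_power monI genIF calF de iF jF (closed_sym t0.+1 (leqnSn t0))).
Qed.
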